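(* Let \(m\) be a positive integer that is not a perfect square, and let \(a,b,c\) be positive integers with \(\gcd(am,b^2-c^2m)=1\). Then \[Frob(a\sqrt m,\,b+c\sqrt m)=(a\sqrt m-1)(b+c\sqrt m-1)(1+\sqrt m)+\mathbb N[\sqrt m].\]
   Context: \(\mathbb N\) denotes the set of non-negative integers. \(\mathbb Z[\sqrt m]=\{u+v\sqrt m\mid u,v\in\mathbb Z\}\) and \(\mathbb N[\sqrt m]=\{u+v\sqrt m\mid u,v\in\mathbb N\}\). For \(\alpha_1,\alpha_2\in\mathbb Z[\sqrt m]\), \(SG(\alpha_1,\alpha_2)=\{\lambda_1\alpha_1+\lambda_2\alpha_2\mid \lambda_1,\lambda_2\in\mathbb N[\sqrt m]\}\) and \(Frob(\alpha_1,\alpha_2)=\{w\in\mathbb Z[\sqrt m]\mid w+\mathbb N[\sqrt m]\subseteq SG(\alpha_1,\alpha_2)\}\). *)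

(* Elements u + v*sqrt m of Z[sqrt m] are represented by pairs
   (u, v) : Z * Z; since m is not a perfect square this representation is
   unique, so Z[sqrt m] is identified with Z * Z with the multiplication below. *)
From Stdlib Require Import ZArith.
Open Scope Z_scope.

Definition zsq := (Z * Z)%type.

Definition zsq_add (x y : zsq) : zsq := (fst x + fst y, snd x + snd y).

Definition zsq_mul (m : Z) (x y : zsq) : zsq :=
  (fst x * fst y + m * (snd x * snd y), fst x * snd y + snd x * fst y).

Definition in_Nsq (x : zsq) : Prop := 0 <= fst x /\ 0 <= snd x.

Definition SG (m : Z) (alpha1 alpha2 : zsq) (w : zsq) : Prop :=
  exists l1 l2 : zsq, in_Nsq l1 /\ in_Nsq l2 /\
    w = zsq_add (zsq_mul m l1 alpha1) (zsq_mul m l2 alpha2).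

Definition Frob (m : Z) (alpha1 alpha2 : zsq) (w : zsq) : Prop :=
  forall n : zsq, in_Nsq n -> SG m alpha1 alpha2 (zsq_add w n).

(* Write α1 = a√m and α2 = b + c√m.  Since gcd(am, b^2 - c^2 m) = 1,
   multiplication by α2 is invertible modulo the ideal (α1) (the inverse is a
   Bezout multiple of the conjugate b - c√m), so every element of Z[√m] is
   congruent modulo (α1) to a unique λ·α2 with λ = u + v√m in the box
   0 <= u < am, 0 <= v < a.  An element lies in SG(α1, α2) iff it exceeds its
   reduced residue λ·α2 by an N[√m]-multiple of α1.  All residues lie below the
   top one T = (am - 1 + (a - 1)√m)·α2, so everything above
   T - (am - 1) - (a - 1)√m is in SG; conversely an element congruent to T but
   strictly below T in one coordinate is not in SG, and every element below
   that bound can be pushed by N[√m] onto such an element.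
   The hypothesis that m is not a square only serves to identify Z[√m] with
   pairs of integers, which the encoding already does. *)
From Stdlib Require Import ZArith Lia.
Open Scope Z_scope.

Lemma nonneg_of_mul_gt_opp (d k : Z) : 0 < d -> - d < k * d -> 0 <= k.
Proof. intros; nia. Qed.

Lemma exists_shift_divide (d x y : Z) :
  0 < d -> exists n, 0 <= n /\ (d | x + n - y).
Proof.
  intros Hd. exists ((y - x) mod d). split.
  - apply Z.mod_pos_bound; exact Hd.
  - exists (- ((y - x) / d)).
    pose proof (Z_div_mod_eq_full (y - x) d). lia.
Qed.

Lemma divide_sub_trans (d x y z : Z) :
  (d | x - y) -> (d | y - z) -> (d | x - z).
Proof.
  intros Hxy Hyz. replace (x - z) with ((x - y) + (y - z)) by ring.
  now apply Z.divide_add_r.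
Qed.

Section Frobenius.

Variables m a b c : Z.
Hypothesis hm : 0 < m.
Hypothesis ha : 0 < a.
Hypothesis hb : 0 < b.
Hypothesis hc : 0 < c.
Hypothesis hgcd : Z.gcd (a * m) (b ^ 2 - c ^ 2 * m) = 1.

(* (x + y√m)·a√m = a m y + a x √m, so this is congruence modulo the ideal (a√m). *)
Definition eq_mod_alpha1 (z z' : zsq) : Prop :=
  (a * m | fst z - fst z') /\ (a | snd z - snd z').

Lemma eq_mod_alpha1_trans (x y z : zsq) :
  eq_mod_alpha1 x y -> eq_mod_alpha1 y z -> eq_mod_alpha1 x z.
Proof.
  intros [Hx1 Hx2] [Hy1 Hy2]. split; eapply divide_sub_trans; eassumption.
Qed.

Lemma eq_mod_mul_alpha2 (u v u' v' : Z) :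
  (a * m | u - u') -> (a | v - v') ->
  eq_mod_alpha1 (zsq_mul m (u, v) (b, c)) (zsq_mul m (u', v') (b, c)).
Proof.
  intros [k1 Hk1] [k2 Hk2]; unfold eq_mod_alpha1, zsq_mul; cbn [fst snd]. split.
  - exists (k1 * b + k2 * c).
    transitivity ((u - u') * b + (v - v') * c * m); [ring|].
    rewrite Hk1, Hk2; ring.
  - exists (k1 * m * c + k2 * b).
    transitivity ((u - u') * c + (v - v') * b); [ring|].
    rewrite Hk1, Hk2; ring.
Qed.

(* With e·am + f·(b^2 - c^2 m) = 1 and (X, Y) the coordinates of
   (du + dv√m)·α2, one has du = e·am·du + f·(b·X - cm·Y) and
   dv = e·am·dv + f·(b·Y - c·X). *)
Lemma eq_mod_mul_alpha2_inv (u v u' v' : Z) :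
  eq_mod_alpha1 (zsq_mul m (u, v) (b, c)) (zsq_mul m (u', v') (b, c)) ->
  (a * m | u - u') /\ (a | v - v').
Proof.
  unfold eq_mod_alpha1, zsq_mul; cbn [fst snd]. intros [[k1 Hk1] [k2 Hk2]].
  destruct (Z.gcd_bezout _ _ _ hgcd) as [e [f Hbez]].
  remember (u - u') as du eqn:Hdu; remember (v - v') as dv eqn:Hdv.
  assert (HX : du * b + dv * c * m = k1 * (a * m)) by (rewrite <- Hk1; subst; ring).
  assert (HY : du * c + dv * b = k2 * a) by (rewrite <- Hk2; subst; ring).
  split.
  - exists (du * e + f * b * k1 - f * c * k2).
    transitivity (du * (e * (a * m) + f * (b ^ 2 - c ^ 2 * m))); [rewrite Hbez; ring|].
    transitivity (du * e * (a * m) + f * (b * (du * b + dv * c * m) - c * m * (du * c + dv * b)));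
      [ring|].
    rewrite HX, HY; ring.
  - exists (dv * e * m + f * b * k2 - f * c * k1 * m).
    transitivity (dv * (e * (a * m) + f * (b ^ 2 - c ^ 2 * m))); [rewrite Hbez; ring|].
    transitivity (dv * e * (a * m) + f * (b * (du * c + dv * b) - c * (du * b + dv * c * m)));
      [ring|].
    rewrite HX, HY; ring.
Qed.

(* Take λ = f·(b - c√m)·z first: λ·α2 = f·(b^2 - c^2 m)·z = z - e·am·z. *)
Lemma exists_reduced_residue (z : zsq) :
  exists u v, 0 <= u < a * m /\ 0 <= v < a /\
    eq_mod_alpha1 z (zsq_mul m (u, v) (b, c)).
Proof.
  destruct z as [s t].
  destruct (Z.gcd_bezout _ _ _ hgcd) as [e [f Hbez]].
  set (u := f * (b * s - c * m * t)); set (v := f * (b * t - c * s)).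
  assert (Hz : eq_mod_alpha1 (s, t) (zsq_mul m (u, v) (b, c))).
  { unfold eq_mod_alpha1, zsq_mul; cbn [fst snd]; split.
    - exists (e * s).
      transitivity (s * (1 - f * (b ^ 2 - c ^ 2 * m))); [subst u v; ring|].
      rewrite <- Hbez; ring.
    - exists (e * m * t).
      transitivity (t * (1 - f * (b ^ 2 - c ^ 2 * m))); [subst u v; ring|].
      rewrite <- Hbez; ring. }
  assert (Ham : 0 < a * m) by nia.
  exists (u mod (a * m)), (v mod a).
  split; [now apply Z.mod_pos_bound|]. split; [now apply Z.mod_pos_bound|].
  apply (eq_mod_alpha1_trans _ _ _ Hz), eq_mod_mul_alpha2.
  - exists (u / (a * m)). pose proof (Z_div_mod_eq_full u (a * m)). lia.
  - exists (v / a). pose proof (Z_div_mod_eq_full v a). lia.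
Qed.

Lemma mul_alpha2_le (u v u' v' : Z) :
  0 <= u <= u' -> 0 <= v <= v' ->
  fst (zsq_mul m (u, v) (b, c)) <= fst (zsq_mul m (u', v') (b, c)) /\
  snd (zsq_mul m (u, v) (b, c)) <= snd (zsq_mul m (u', v') (b, c)).
Proof.
  unfold zsq_mul; cbn [fst snd]; intros Hu Hv.
  assert (u * b <= u' * b) by (apply Z.mul_le_mono_nonneg_r; lia).
  assert (u * c <= u' * c) by (apply Z.mul_le_mono_nonneg_r; lia).
  assert (v * b <= v' * b) by (apply Z.mul_le_mono_nonneg_r; lia).
  assert (v * c <= v' * c) by (apply Z.mul_le_mono_nonneg_r; lia).
  assert (m * (v * c) <= m * (v' * c)) by (apply Z.mul_le_mono_nonneg_l; lia).
  split; lia.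
Qed.

Definition top_residue : zsq := zsq_mul m (a * m - 1, a - 1) (b, c).

Definition frob_corner : zsq :=
  (fst top_residue - (a * m - 1), snd top_residue - (a - 1)).

Lemma frob_corner_eq :
  zsq_mul m (zsq_mul m (-1, a) (b - 1, c)) (1, 1) = frob_corner.
Proof. unfold frob_corner, top_residue, zsq_mul; cbn [fst snd]; f_equal; ring. Qed.

Lemma SG_of_frob_corner_le (z : zsq) :
  fst frob_corner <= fst z -> snd frob_corner <= snd z -> SG m (0, a) (b, c) z.
Proof.
  intros H1 H2.
  destruct (exists_reduced_residue z) as [u [v [Hu [Hv [[k1 Hk1] [k2 Hk2]]]]]].
  destruct (mul_alpha2_le u v (a * m - 1) (a - 1)) as [Hle1 Hle2]; try lia.
  unfold frob_corner, top_residue in *; cbn [fst snd] in H1, H2.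
  assert (0 <= k1) by (apply (nonneg_of_mul_gt_opp (a * m)); lia).
  assert (0 <= k2) by (apply (nonneg_of_mul_gt_opp a); lia).
  exists (k2, k1), (u, v). do 2 (split; [split; cbn; lia|]).
  destruct z as [s t]; unfold zsq_add, zsq_mul in *; cbn [fst snd] in *.
  f_equal; lia.
Qed.

(* A representation λ1·α1 + λ2·α2 of such an element forces
   λ2 ≡ am - 1 + (a - 1)√m modulo (am, a); with nonnegative coefficients this
   makes λ2 at least that box corner, hence the element at least T. *)
Lemma not_SG_below_top_residue (z : zsq) :
  eq_mod_alpha1 z top_residue ->
  fst z < fst top_residue \/ snd z < snd top_residue ->
  ~ SG m (0, a) (b, c) z.
Proof.
  intros Hz Hlt [[x y] [[u v] [[Hx Hy] [[Hu Hv] ->]]]]; cbn [fst snd] in *.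
  assert (Hres : eq_mod_alpha1 (zsq_mul m (u, v) (b, c)) top_residue).
  { refine (eq_mod_alpha1_trans _ _ _ _ Hz).
    unfold eq_mod_alpha1, zsq_add, zsq_mul; cbn [fst snd]; split.
    - exists (- y); ring.
    - exists (- x); ring. }
  apply eq_mod_mul_alpha2_inv in Hres as [[k1 Hk1] [k2 Hk2]].
  assert (0 <= k1) by (apply (nonneg_of_mul_gt_opp (a * m)); nia).
  assert (0 <= k2) by (apply (nonneg_of_mul_gt_opp a); lia).
  destruct (mul_alpha2_le (a * m - 1) (a - 1) u v) as [Hle1 Hle2]; try nia.
  unfold top_residue, zsq_add, zsq_mul in *; cbn [fst snd] in *. nia.
Qed.

Lemma frob_corner_le_of_Frob (w : zsq) :
  Frob m (0, a) (b, c) w -> fst frob_corner <= fst w /\ snd frob_corner <= snd w.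
Proof.
  intros HF. assert (Ham : 0 < a * m) by nia.
  destruct w as [w1 w2]; unfold frob_corner; cbn [fst snd].
  split; apply Z.nlt_ge; intros Hlt.
  - destruct (exists_shift_divide a w2 (snd top_residue) ha) as [n [Hn Hd]].
    apply (not_SG_below_top_residue (fst top_residue - a * m, w2 + n)).
    + split; cbn [fst snd]; [exists (-1); ring | exact Hd].
    + left; cbn; lia.
    + replace (fst top_residue - a * m, w2 + n)
        with (zsq_add (w1, w2) (fst top_residue - a * m - w1, n))
        by (unfold zsq_add; cbn; f_equal; ring).
      apply HF; split; cbn [fst snd]; lia.
  - destruct (exists_shift_divide (a * m) w1 (fst top_residue) Ham) as [n [Hn Hd]].
    apply (not_SG_below_top_residue (w1 + n, snd top_residue - a)).
    + split; cbn [fst snd]; [exact Hd | exists (-1); ring].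
    + right; cbn; lia.
    + replace (w1 + n, snd top_residue - a)
        with (zsq_add (w1, w2) (n, snd top_residue - a - w2))
        by (unfold zsq_add; cbn; f_equal; ring).
      apply HF; split; cbn [fst snd]; lia.
Qed.

End Frobenius.

Theorem theorem4 (m a b c : Z)
  (hm : 0 < m) (hsq : forall k : Z, k * k <> m)
  (ha : 0 < a) (hb : 0 < b) (hc : 0 < c)
  (hgcd : Z.gcd (a * m) (b ^ 2 - c ^ 2 * m) = 1) :
  forall w : zsq,
    Frob m (0, a) (b, c) w <->
    exists n : zsq, in_Nsq n /\
      w = zsq_add
            (zsq_mul m (zsq_mul m (-1, a) (b - 1, c)) (1, 1)) n.
Proof.
  intros w. rewrite frob_corner_eq.
  pose proof (frob_corner_le_of_Frob m a b c hm ha hb hc hgcd w) as Hle.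
  pose proof (SG_of_frob_corner_le m a b c hm ha hb hc hgcd) as HSG.
  set (F := frob_corner m a b c) in *; clearbody F.
  split.
  - intros HF; destruct (Hle HF) as [H1 H2].
    exists (fst w - fst F, snd w - snd F); split.
    + split; cbn [fst snd]; lia.
    + destruct w, F; unfold zsq_add; cbn [fst snd]; f_equal; ring.
  - intros [n [[Hn1 Hn2] ->]] p [Hp1 Hp2].
    apply HSG; unfold zsq_add; cbn [fst snd]; lia.
Qed.
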